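(* Let $G$ be a connected graph on $5$ vertices. Then $q(G)=2$ if and only if $G$ contains a (not necessarily induced) spanning subgraph isomorphic to the single-ended candle $G'_2$.
   Context: For a graph $G$ on $n$ vertices, $\mathcal{S}(G)$ is the set of real symmetric $n\times n$ matrices $A=[a_{ij}]$ with $a_{ij}\neq0$ for $i\ne j$ iff $\{i,j\}\in E(G)$ (diagonal unrestricted); $q(G)$ is the minimum number of distinct eigenvalues of a matrix in $\mathcal{S}(G)$. $G'_2$ is the graph on $\{1,2,3,4,5\}$ with edges $12,13,24,25,34,35,45$ (7 edges). *)

From HB Require Import structures.
From mathcomp Require Import all_boot all_order all_algebra all_fingroup.
From mathcomp Require Import reals.
Set Implicit Arguments. Unset Strict Implicit. Unset Printing Implicit Defensive.
Import Order.TTheory GRing.Theory Num.Theory.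
Local Open Scope ring_scope.

Definition simple_graph (n : nat) (G : rel 'I_n) : Prop :=
  symmetric G /\ irreflexive G.

Definition connected_graph (n : nat) (G : rel 'I_n) : Prop :=
  forall i j : 'I_n, connect G i j.

Definition in_S (R : realType) (n : nat) (G : rel 'I_n) (A : 'M[R]_n) : Prop :=
  A^T = A /\ forall i j : 'I_n, i != j -> (A i j != 0) = G i j.

Definition num_distinct_eig (R : realType) (n : nat) (A : 'M[R]_n) (k : nat)
  : Prop :=
  exists s : seq R, [/\ uniq s, size s = k & forall a : R, (a \in s) = eigenvalue A a].

Definition q_eq (R : realType) (n : nat) (G : rel 'I_n) (k : nat) : Prop :=
  (exists A : 'M[R]_n, in_S G A /\ num_distinct_eig A k) /\
  (forall (A : 'M[R]_n) (m : nat), in_S G A -> num_distinct_eig A m -> (k <= m)%N).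

(* The single-ended candle G'_2 on vertices 0..4 (paper's 1..5 shifted by one):
   edges 01,02,13,14,23,24,34. *)
Definition candle_edges : seq (nat * nat) :=
  [:: (0,1); (0,2); (1,3); (1,4); (2,3); (2,4); (3,4)]%N.

Definition G2' : rel 'I_5 :=
  fun i j => ((val i, val j) \in candle_edges) || ((val j, val i) \in candle_edges).

Definition has_spanning_copy (n : nat) (H G : rel 'I_n) : Prop :=
  exists p : 'S_n, forall i j : 'I_n, H i j -> G (p i) (p j).

(* A real symmetric matrix is annihilated by the product of
      ('X - l) over its distinct eigenvalues (complex spectral theorem).  So a
      matrix A of S(G) with two eigenvalues l1, l2 has (A - l1)(A - l2) = 0 and
      A^2 vanishes at every non-edge, while a nonzero off-diagonal entry forces
      at least two eigenvalues.  Conversely, if A^2 = cA, A is neither 0 nor cI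
      and c != 0, then A has exactly the eigenvalues 0 and c; Gram matrices
      XX^T + YY^T of orthogonal vectors X, Y with X.X = Y.Y = c are of this kind.
   2. Obstructions.  If A^2 vanishes at the non-edges of G, then no two
      non-adjacent vertices have a unique common neighbour, and no three pairwise
      non-adjacent vertices with a common neighbour d have all their pairwise
      common neighbours in {d, e}: the rows of A restricted to {d, e} would be
      three pairwise orthogonal plane vectors with nonzero first coordinates.
   3. A finite check.  Simple graphs on five vertices are encoded by ten bits;
      evaluating two boolean procedures on all 1024 codes shows that every graph
      containing a candle carries an integer certificate (X, Y, c) as in 1, and
      that every connected graph without a candle has one of the obstructions
      of 2.  The theorem then follows by decoding G. *)

From mathcomp Require Import all_boot all_order all_algebra all_fingroup.
From mathcomp Require Import reals.
From mathcomp Require Import spectral sesquilinear ring lra.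
From mathcomp.real_closed Require Import complex.
Set Implicit Arguments. Unset Strict Implicit. Unset Printing Implicit Defensive.
Import Order.TTheory GRing.Theory Num.Theory.

Local Open Scope ring_scope.

Lemma real_complex_Re (R : rcfType) (x : R[i]) :
  x \is Num.real -> x = (complex.Re x)%:C%C.
Proof.
case: x => a b; rewrite realE !lecE /= => /orP[]/andP[/eqP b0 _];
  by apply/eqP; rewrite eq_complex /= eqxx /= ?b0.
Qed.

(* The diagonal of the spectral decomposition of a normal matrix consists of
   eigenvalues: the rows of the unitary change of basis are eigenvectors. *)
Lemma spectral_diag_eigenvalue (C : numClosedFieldType) n (A : 'M[C]_n) k :
  A \is normalmx -> eigenvalue A (spectral_diag A 0 k).
Proof.
move=> /orthomx_spectralP A_eq; have P_unit := spectral_unit A.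
apply/eigenvalueP; exists (row k (spectralmx A)).
  rewrite -row_mul {2}A_eq !mulmxA mulmxV // mul1mx row_mul row_diag_mx.
  by rewrite -scalemxAl -rowE.
rewrite -row_free_unit in P_unit; apply: contraTneq P_unit => rk0.
by apply/row_freePn; exists k; rewrite rk0 sub0mx.
Qed.

Lemma normal_horner_spectral (C : numClosedFieldType) n (A : 'M[C]_n.+1) p :
  A \is normalmx -> (forall k, root p (spectral_diag A 0 k)) -> horner_mx A p = 0.
Proof.
move=> A_normal p_roots; have P_unit := spectral_unit A.
rewrite (orthomx_spectralP A_normal) horner_mx_uconjC ?horner_mx_diag //.
suff -> : map_mx (horner p) (spectral_diag A) = 0 by rewrite linear0 mulmx0 mul0mx.
by apply/matrixP => i j; rewrite ord1 !mxE; apply/eqP/p_roots.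
Qed.

(* A real symmetric matrix is annihilated by prod ('X - l) over any list of
   reals containing its eigenvalues; its complexification is hermitian, hence
   unitarily diagonalizable with real eigenvalues. *)
Lemma sym_horner_eigenvalues (R : realType) n (A : 'M[R]_n.+1) (s : seq R) :
  A^T = A -> (forall a, eigenvalue A a -> a \in s) ->
  horner_mx A (\prod_(l <- s) ('X - l%:P)) = 0.
Proof.
move=> A_sym s_eig; set p := \prod_(l <- s) _.
pose f := real_complex R; pose Ac := map_mx f A.
have Ac_herm : Ac \is hermsymmx.
  apply: realsym_hermsym.
    apply/is_hermitianmxP; rewrite expr0 scale1r.
    by apply/matrixP => i j; rewrite !mxE -[in RHS]A_sym mxE.
  apply/mxOverP => i j; rewrite mxE realE ler0c.
  have -> : (f (A i j) <= 0) = (A i j <= 0) by rewrite -(lecR (A i j) 0).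
  by rewrite -realE num_real.
have d_real := hermitian_spectral_diag_real Ac_herm.
apply/eqP; rewrite -(map_mx_eq0 f) map_horner_mx; apply/eqP.
apply: normal_horner_spectral; first exact: hermitian_normalmx.
move=> k; have dk_real := mxOverP d_real 0 k.
rewrite (real_complex_Re dk_real) fmorph_root root_prod_XsubC; apply: s_eig.
have := spectral_diag_eigenvalue k (hermitian_normalmx Ac_herm).
by rewrite {1}(real_complex_Re dk_real) eigenvalue_map.
Qed.

Lemma horner_mx_XsubC2 (R : comNzRingType) n (A : 'M[R]_n.+1) l1 l2 :
  horner_mx A (\prod_(l <- [:: l1; l2]) ('X - l%:P)) = (A - l1%:M) *m (A - l2%:M).
Proof.
by rewrite !big_cons big_nil mulr1 rmorphM /= !rmorphB /= horner_mx_X !horner_mx_C.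
Qed.

Lemma in_S_zero (R : realType) n (G : rel 'I_n) (A : 'M[R]_n) x y :
  in_S G A -> x != y -> ~~ G x y -> A x y = 0.
Proof. by case=> _ A_pat xy; rewrite -A_pat // negbK => /eqP. Qed.

Definition sqr_vanishes_off_edges (R : realType) n (G : rel 'I_n) (A : 'M[R]_n) : Prop :=
  forall x y, x != y -> ~~ G x y -> (A *m A) x y = 0.

(* Two eigenvalues l1, l2 give A^2 = (l1 + l2) A - l1 l2 I, whose off-diagonal
   entries vanish wherever those of A do. *)
Lemma two_eigenvalues_sqr_vanishes (R : realType) n (G : rel 'I_n.+1) (A : 'M[R]_n.+1) :
  in_S G A -> num_distinct_eig A 2%N -> sqr_vanishes_off_edges G A.
Proof.
move=> AS [s [_ s_size s_eig]] x y xy Gxy.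
case: s s_size s_eig => [|l1 [|l2 [|//]]] // _ s_eig.
have Axy := in_S_zero AS xy Gxy.
have s_eig' a : eigenvalue A a -> a \in [:: l1; l2] by rewrite s_eig.
have /matrixP/(_ x y) := sym_horner_eigenvalues AS.1 s_eig'.
rewrite horner_mx_XsubC2 mulmxBl !mulmxBr mul_mx_scalar mul_scalar_mx -scalar_mxM.
by rewrite !mxE Axy (negPf xy) !mulr0 mulr0n !subr0.
Qed.

(* A symmetric matrix with a nonzero off-diagonal entry is not scalar, hence
   has at least two eigenvalues. *)
Lemma two_le_num_eigenvalues (R : realType) n (G : rel 'I_n.+1) (A : 'M[R]_n.+1) x y m :
  in_S G A -> x != y -> G x y -> num_distinct_eig A m -> (1 < m)%N.
Proof.
move=> AS xy Gxy [s [_ <- s_eig]].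
have s_eig' a : eigenvalue A a -> a \in s by rewrite s_eig.
have := sym_horner_eigenvalues AS.1 s_eig'; case: s {s_eig s_eig'} => [|l [|? ?]] //=.
  by rewrite big_nil rmorph1 => /eqP; rewrite oner_eq0.
rewrite big_seq1 rmorphB /= horner_mx_X horner_mx_C => /matrixP/(_ x y).
rewrite !mxE (negPf xy) mulr0n subr0 => Axy.
by have := AS.2 x y xy; rewrite Axy eqxx Gxy.
Qed.

Lemma q_eq_twoP (R : realType) n (G : rel 'I_n.+1) x y : x != y -> G x y ->
  q_eq R G 2%N <-> exists A : 'M[R]_n.+1, in_S G A /\ num_distinct_eig A 2%N.
Proof.
move=> xy Gxy; split=> [[] //|A2]; split=> // A m AS.
exact: two_le_num_eigenvalues AS xy Gxy.
Qed.

Lemma eigenvalue_of_stable (F : fieldType) m n (A : 'M[F]_n) (W : 'M[F]_(m, n)) a :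
  W != 0 -> W *m A = a *: W -> eigenvalue A a.
Proof.
by move=> W0 WA; apply: contraNneq W0 => E0; rewrite -submx0 -E0; apply/eigenspaceP.
Qed.

Lemma sqr_scale_num_eigenvalues (R : realType) n (A : 'M[R]_n) c :
  c != 0 -> A *m A = c *: A -> A != 0 -> A != c%:M -> num_distinct_eig A 2%N.
Proof.
move=> c0 AA A0 Ac; exists [:: 0; c]; split=> //; first by rewrite /= inE eq_sym c0.
move=> a; apply/idP/idP.
  rewrite !inE => /orP[/eqP-> | /eqP->].
    apply: (@eigenvalue_of_stable _ _ _ _ (A - c%:M)); first by rewrite subr_eq0.
    by rewrite mulmxBl AA mul_scalar_mx subrr scale0r.
  exact: eigenvalue_of_stable A0 AA.
move/eigenvalueP => [v vA v0].
have vAA : v *m A *m A = (a * a) *: v by rewrite vA -scalemxAl vA scalerA.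
have : (a * a) *: v = (c * a) *: v by rewrite -vAA -mulmxA AA -scalemxAr vA scalerA.
move/eqP; rewrite -subr_eq0 -scalerBl scaler_eq0 (negPf v0) orbF -mulrBl.
by rewrite mulf_eq0 subr_eq0 !inE orbC.
Qed.

Lemma gram_sqr (R : comNzRingType) n (X Y : 'cV[R]_n) c :
  X^T *m X = c%:M -> Y^T *m Y = c%:M -> X^T *m Y = 0 ->
  let A := X *m X^T + Y *m Y^T in A *m A = c *: A.
Proof.
move=> XX YY XY A; have YX : Y^T *m X = 0 by rewrite -[LHS]trmxK trmx_mul trmxK XY trmx0.
have split4 (U V W Z : 'cV[R]_n) : U *m V^T *m (W *m Z^T) = U *m (V^T *m W) *m Z^T.
  by rewrite !mulmxA.
rewrite /A mulmxDl !mulmxDr !split4 XX YY XY YX !mulmx0 !mul0mx addr0 add0r.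
by rewrite !mul_mx_scalar -!scalemxAl scalerDr.
Qed.

Lemma sqr_scale_in_S (R : realType) n (G : rel 'I_n) (A : 'M[R]_n) c x y :
  in_S G A -> x != y -> G x y -> c != 0 -> A *m A = c *: A -> num_distinct_eig A 2%N.
Proof.
move=> [_ A_pat] xy Gxy c0 AA; have := A_pat x y xy; rewrite Gxy => Axy.
apply: sqr_scale_num_eigenvalues c0 AA _ _.
  by apply: contraNneq Axy => ->; rewrite mxE.
by apply: contraNneq Axy => ->; rewrite mxE (negPf xy) mulr0n.
Qed.

(* Three pairwise orthogonal vectors (a_i, b_i) of the plane cannot all have a
   nonzero first coordinate: (a1 a2 a3)^2 would equal -(b1 b2 b3)^2. *)
Lemma plane_orthogonal_triple (R : realDomainType) (a1 a2 a3 b1 b2 b3 : R) :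
  a1 != 0 -> a2 != 0 -> a3 != 0 ->
  a1 * a2 + b1 * b2 = 0 -> a1 * a3 + b1 * b3 = 0 -> a2 * a3 + b2 * b3 = 0 -> False.
Proof.
move=> a1_0 a2_0 a3_0 o12 o13 o23.
have sq_eq : (a1 * a2 * a3) ^+ 2 = - (b1 * b2 * b3) ^+ 2.
  have -> : (a1 * a2 * a3) ^+ 2 = (a1 * a2) * (a1 * a3) * (a2 * a3) by ring.
  have oppE (u v : R) : u + v = 0 -> u = - v by move/addr0_eq <-; rewrite opprK.
  by rewrite (oppE _ _ o12) (oppE _ _ o13) (oppE _ _ o23); ring.
have : 0 < (a1 * a2 * a3) ^+ 2 by rewrite lt0r sqr_ge0 sqrf_eq0 !mulf_neq0.
have := sqr_ge0 (b1 * b2 * b3); rewrite sq_eq; lra.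
Qed.

Section Obstructions.
Variables (R : realType) (n : nat) (G : rel 'I_n) (A : 'M[R]_n).
Hypotheses (G_irr : irreflexive G) (AS : in_S G A).
Hypothesis A2_nonedge : sqr_vanishes_off_edges G A.

Lemma edge_entry_neq0 x y : G x y -> A x y != 0.
Proof. by move=> Gxy; rewrite AS.2 //; apply: contraTneq Gxy => ->; rewrite G_irr. Qed.

Lemma walk_term_zero x y k : x != y -> ~~ G x y -> ~~ (G x k && G k y) ->
  A x k * A k y = 0.
Proof.
move=> xy Gxy; have Axy := in_S_zero AS xy Gxy.
have [-> | kx] := eqVneq k x; first by rewrite Axy mulr0.
have [-> | ky] := eqVneq k y; first by rewrite Axy mul0r.
case/nandP => [Gxk | Gky]; last by rewrite (in_S_zero AS ky Gky) mulr0.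
by rewrite (in_S_zero AS _ Gxk) ?mul0r // eq_sym.
Qed.

Lemma sum_over_common_nbrs x y (ds : seq 'I_n) : x != y -> ~~ G x y -> uniq ds ->
  (forall k, G x k -> G k y -> k \in ds) -> \sum_(k <- ds) A x k * A k y = 0.
Proof.
move=> xy Gxy ds_uniq ds_common; rewrite big_uniq //.
rewrite -[RHS](A2_nonedge xy Gxy) mxE [RHS](bigID (mem ds)) /=.
rewrite [X in _ = _ + X]big1 ?addr0 //.
move=> k k_ds; apply: walk_term_zero xy Gxy _; apply: contra k_ds => /andP[].
exact: ds_common.
Qed.

(* Obstruction 1: a unique common neighbour w would give A_xw A_wy = 0. *)
Lemma no_unique_common_nbr x y w : x != y -> ~~ G x y -> G x w -> G w y ->
  (forall k, G x k -> G k y -> k \in [:: w]) -> False.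
Proof.
move=> xy Gxy Gxw Gwy w_only.
have := sum_over_common_nbrs xy Gxy (isT : uniq [:: w]) w_only.
by rewrite big_seq1 => /eqP; rewrite mulf_eq0 !(negPf (edge_entry_neq0 _)).
Qed.

Lemma two_common_nbrs_orthogonal x y d e : x != y -> ~~ G x y -> d != e ->
  (forall k, G x k -> G k y -> k \in [:: d; e]) -> A x d * A y d + A x e * A y e = 0.
Proof.
move=> xy Gxy de de_only; have A_sym i j : A i j = A j i by rewrite -[in LHS]AS.1 mxE.
have de_uniq : uniq [:: d; e] by rewrite /= inE de.
move: (sum_over_common_nbrs xy Gxy de_uniq de_only).
by rewrite !big_cons big_nil addr0 (A_sym d y) (A_sym e y).
Qed.

Lemma no_three_with_two_common_nbrs a1 a2 a3 d e : d != e ->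
  a1 != a2 -> a1 != a3 -> a2 != a3 -> ~~ G a1 a2 -> ~~ G a1 a3 -> ~~ G a2 a3 ->
  G a1 d -> G a2 d -> G a3 d ->
  (forall k, G a1 k -> G k a2 -> k \in [:: d; e]) ->
  (forall k, G a1 k -> G k a3 -> k \in [:: d; e]) ->
  (forall k, G a2 k -> G k a3 -> k \in [:: d; e]) -> False.
Proof.
move=> de a12 a13 a23 G12 G13 G23 G1d G2d G3d c12 c13 c23.
apply: (plane_orthogonal_triple (edge_entry_neq0 G1d) (edge_entry_neq0 G2d)
          (edge_entry_neq0 G3d)).
- exact: two_common_nbrs_orthogonal a12 G12 de c12.
- exact: two_common_nbrs_orthogonal a13 G13 de c13.
- exact: two_common_nbrs_orthogonal a23 G23 de c23.
Qed.

End Obstructions.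

Local Close Scope ring_scope.

(* Vertices of the finite check are the naturals 0..4; the procedures below
   compute on nat so that they can be evaluated on all graphs at once. *)
Definition vertices : seq nat := iota 0 5.

Lemma has_vertexP (P : pred nat) : reflect (exists i : 'I_5, P i) (has P vertices).
Proof.
apply: (iffP hasP) => [[k] | [k Pk]].
  by rewrite mem_iota => /= k_lt5 Pk; exists (Ordinal k_lt5).
by exists (val k); rewrite // mem_iota /= ltn_ord.
Qed.

Lemma all_vertexP (P : pred nat) : reflect (forall i : 'I_5, P i) (all P vertices).
Proof.
apply: (iffP allP) => [P_all i | P_all i]; first by rewrite P_all // mem_iota /= ltn_ord.
by rewrite mem_iota => /= i_lt5; exact: (P_all (Ordinal i_lt5)).
Qed.

Definition vertex_pairs : seq (nat * nat) :=
  [:: (0, 1); (0, 2); (0, 3); (0, 4); (1, 2); (1, 3); (1, 4); (2, 3); (2, 4); (3, 4)].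

Definition bits_graph (b : seq bool) : rel nat :=
  fun i j => (i != j) && nth false b (index (minn i j, maxn i j) vertex_pairs).

Definition graph_bits (G : rel 'I_5) : seq bool :=
  [seq G (inord p.1) (inord p.2) | p <- vertex_pairs].

Lemma graph_bitsE (G : rel 'I_5) : simple_graph G ->
  forall i j : 'I_5, G i j = bits_graph (graph_bits G) i j.
Proof.
move=> [G_sym G_irr] i j; rewrite -(inord_val i) -(inord_val j).
case: i j => [[|[|[|[|[|i]]]]] Hi] [[|[|[|[|[|j]]]]] Hj] //=;
  by rewrite /bits_graph !inordK //= ?G_irr // G_sym.
Qed.

Fixpoint bitseqs (n : nat) : seq (seq bool) :=
  if n is n'.+1 then [seq x :: s | x <- [:: true; false], s <- bitseqs n'] else [:: [::]].

Lemma bitseqsP (b : seq bool) : b \in bitseqs (size b).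
Proof.
by elim: b => [|x b IH] //; rewrite [bitseqs _]/= !mem_cat; case: x; rewrite map_f ?orbT.
Qed.

(* Connectivity: every proper nonempty vertex set S has an edge leaving it. *)
Definition crossing_edge (g : rel nat) (S : seq bool) : bool :=
  has (fun i => has (fun j => [&& nth false S i, ~~ nth false S j & g i j]) vertices)
    vertices.

Definition cuts_crossed (g : rel nat) : bool :=
  all (fun S => has (nth false S) vertices ==>
                has (fun j => ~~ nth false S j) vertices ==> crossing_edge g S)
    (bitseqs 5).

Definition candle_at (g : rel nat) (l : seq nat) : bool :=
  all (fun e => g (nth 0 l e.1) (nth 0 l e.2)) candle_edges.

Definition has_candle (g : rel nat) : bool := has (candle_at g) (permutations vertices).

Definition common_nbrs_within (g : rel nat) (x y : nat) (ds : seq nat) : bool :=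
  ~~ g x y && all (fun k => (k \in ds) || ~~ (g x k && g k y)) vertices.

Definition has_unique_common_nbr (g : rel nat) : bool :=
  has (fun x => has (fun y => has (fun w =>
    [&& x != y, g x w, g w y & common_nbrs_within g x y [:: w]])
  vertices) vertices) vertices.

Definition has_triple_two_common_nbrs (g : rel nat) : bool :=
  has (fun d => has (fun e => has (fun a1 => has (fun a2 => has (fun a3 =>
    [&& a1 < a2, a2 < a3, d != e, g a1 d, g a2 d, g a3 d,
        common_nbrs_within g a1 a2 [:: d; e], common_nbrs_within g a1 a3 [:: d; e] &
        common_nbrs_within g a2 a3 [:: d; e]])
  vertices) vertices) vertices) vertices) vertices.

Section Certificates.
Local Open Scope ring_scope.

Definition dotz (x y : seq int) : int := foldr (fun k s => x`_k * y`_k + s) 0 vertices.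

Definition certifies (g : rel nat) (cert : seq int * seq int * int) : bool :=
  let: (x, y, c) := cert in
  [&& c != 0, dotz x x == c, dotz y y == c, dotz x y == 0 &
   all (fun i => all (fun j => (i == j) || ((x`_i * x`_j + y`_i * y`_j != 0) == g i j))
     vertices) vertices].

(* Certificates for the eight graphs obtained from the candle, labelled as in
   candle_edges, by adding any subset of the edges 03, 04, 12. *)
Definition candle_certificates : seq (seq int * seq int * int) :=
  [:: ([:: 2; -2; 2; -2; 1], [:: -2; 0; 3; 0; -2], 17);
      ([:: -2; 0; 2; -2; -1], [:: -2; 2; 0; 1; 2], 13);
      ([:: 1; 0; 3; 0; -2], [:: 1; 2; 1; -2; 2], 14);
      ([:: -2; 1; 0; -3; -1], [:: 2; 0; 3; -1; -1], 15);
      ([:: 2; 2; -2; -3; -1], [:: 3; 1; 2; 2; -2], 22);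
      ([:: 1; 1; 0; -2; 3], [:: -1; 0; 3; -2; -1], 15);
      ([:: 2; -2; 2; 0; 0], [:: 0; 1; 1; 3; -1], 12);
      ([:: 5; 1; 1; 0; 0], [:: 0; 1; -1; 3; 4], 27)].

Definition relabel (l : seq nat) (cert : seq int * seq int * int) :=
  let: (x, y, c) := cert in
  ([seq x`_(index i l) | i <- vertices], [seq y`_(index i l) | i <- vertices], c).

End Certificates.

Definition candle_certified (g : rel nat) : bool :=
  has (fun l => candle_at g l && has (certifies g \o relabel l) candle_certificates)
    (permutations vertices).

Lemma candle_graphs_certified :
  all (fun b => has_candle (bits_graph b) ==> candle_certified (bits_graph b))
    (bitseqs 10).
Proof. by lazy. Qed.

Lemma connected_graphs_classified :
  all (fun b => cuts_crossed (bits_graph b) ==>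
         [|| has_candle (bits_graph b), has_unique_common_nbr (bits_graph b)
           | has_triple_two_common_nbrs (bits_graph b)])
    (bitseqs 10).
Proof. by lazy. Qed.

Lemma connect_cross (T : finType) (e : rel T) (P : pred T) x y :
  connect e x y -> P x -> ~~ P y -> exists u v, [/\ e u v, P u & ~~ P v].
Proof.
move/connectP => [p]; elim: p x => [|z p IH] x /=; first by move=> _ -> ->.
move=> /andP[exz pz] y_last Px; have [Pz | nPz] := boolP (P z).
  exact: IH pz y_last Pz.
by exists x, z.
Qed.

Section Decoding.
Variables (G : rel 'I_5) (g : rel nat).
Hypotheses (G_sym : symmetric G) (Gg : forall i j : 'I_5, G i j = g i j).

Lemma connected_cuts_crossed : connected_graph G -> cuts_crossed g.
Proof.
move=> G_conn; apply/allP => S _; apply/implyP => /has_vertexP[i Si].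
apply/implyP => /has_vertexP[j nSj].
have [u [v [Guv Su nSv]]] := connect_cross (P := fun k : 'I_5 => nth false S k)
  (G_conn i j) Si nSj.
by apply/has_vertexP; exists u; apply/has_vertexP; exists v; rewrite Su nSv -Gg.
Qed.

Lemma common_nbrs_withinP (x y : 'I_5) (ds : seq 'I_5) :
  common_nbrs_within g x y (map val ds) ->
  ~~ G x y /\ forall k, G x k -> G k y -> k \in ds.
Proof.
rewrite Gg => /andP[gxy /all_vertexP ds_common]; split=> // k Gxk Gky.
by have := ds_common k; rewrite (mem_map val_inj) -!Gg Gxk Gky orbF.
Qed.

Lemma has_candleP : reflect (has_spanning_copy G2' G) (has_candle g).
Proof.
apply: (iffP hasP) => [[l l_perm /allP l_candle] | [p p_copy]].
  move: l_perm; rewrite mem_permutations => l_perm.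
  have l_lt5 (i : 'I_5) : nth 0 l i < 5.
    have : nth 0 l i \in vertices.
      by rewrite -(perm_mem l_perm) mem_nth ?(perm_size l_perm).
    by rewrite mem_iota.
  pose f i := Ordinal (l_lt5 i).
  have f_inj : injective f.
    move=> i j /(congr1 val) /eqP; rewrite /= nth_uniq ?(perm_size l_perm) //.
      by move/eqP/val_inj.
    by rewrite (perm_uniq l_perm) iota_uniq.
  have G_f (i j : 'I_5) : (val i, val j) \in candle_edges -> G (f i) (f j).
    by move=> /l_candle g_ij; rewrite Gg.
  exists (perm f_inj) => i j; rewrite /G2' !permE.
  by case/orP => /G_f //; rewrite G_sym.
exists (map val (map p (enum 'I_5))).
  rewrite mem_permutations /vertices -val_enum_ord; apply: perm_map.
  apply: uniq_perm; rewrite ?(map_inj_uniq (@perm_inj _ p)); try exact: enum_uniq.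
  move=> i; rewrite mem_enum inE; apply/mapP.
  by exists (p^-1 i)%g; rewrite ?mem_enum ?permKV.
apply/allP => e e_edge.
have /andP[e1_lt5 e2_lt5] : (e.1 < 5) && (e.2 < 5) by move: e e_edge; apply/allP.
rewrite !(nth_map ord0) ?size_map -?enumT ?size_enum_ord //.
rewrite -[e.1]/(val (Ordinal e1_lt5)) -[e.2]/(val (Ordinal e2_lt5)) !nth_ord_enum -Gg.
by apply: p_copy; rewrite /G2' /= -surjective_pairing e_edge.
Qed.

Lemma unique_common_nbr_obstructed (R : realType) (A : 'M[R]_5) :
  irreflexive G -> in_S G A -> sqr_vanishes_off_edges G A ->
  ~~ has_unique_common_nbr g.
Proof.
move=> G_irr AS A2; apply/negP => /has_vertexP[x /has_vertexP[y /has_vertexP[w]]].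
rewrite -!Gg (inj_eq val_inj) => /and4P[xy Gxw Gwy].
move=> /(@common_nbrs_withinP x y [:: w])[Gxy w_only].
exact: (no_unique_common_nbr G_irr AS A2 xy Gxy Gxw Gwy w_only).
Qed.

Lemma triple_two_common_nbrs_obstructed (R : realType) (A : 'M[R]_5) :
  irreflexive G -> in_S G A -> sqr_vanishes_off_edges G A ->
  ~~ has_triple_two_common_nbrs g.
Proof.
move=> G_irr AS A2; apply/negP.
move=> /has_vertexP[d /has_vertexP[e /has_vertexP[a1 /has_vertexP[a2 /has_vertexP[a3]]]]].
have neq_lt (i j : 'I_5) : i < j -> i != j by rewrite -(inj_eq val_inj) => /ltn_eqF ->.
rewrite -!Gg (inj_eq val_inj) => /and5P[lt12 lt23 de G1d /and5P[G2d G3d c12 c13 c23]].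
have a13 := neq_lt _ _ (ltn_trans lt12 lt23).
move: lt12 lt23 => /neq_lt a12 /neq_lt a23.
have [G12 {}c12] := common_nbrs_withinP (ds := [:: d; e]) c12.
have [G13 {}c13] := common_nbrs_withinP (ds := [:: d; e]) c13.
have [G23 {}c23] := common_nbrs_withinP (ds := [:: d; e]) c23.
exact: (no_three_with_two_common_nbrs G_irr AS A2 de a12 a13 a23 G12 G13 G23 G1d G2d G3d).
Qed.

Local Open Scope ring_scope.

Lemma certificate_sound (R : realType) (cert : seq int * seq int * int) :
  certifies g cert ->
  exists A : 'M[R]_5, in_S G A /\ exists2 c : R, c != 0 & A *m A = c *: A.
Proof.
case: cert => [[x y] c] /and5P[c0 /eqP xx /eqP yy /eqP xy /all_vertexP pat].
pose col (z : seq int) : 'cV[R]_5 := \col_i (z`_i)%:~R.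
have col_dot z t : (col z)^T *m col t = (dotz z t)%:~R%:M.
  apply/matrixP => i j; rewrite !ord1 !mxE eqxx mulr1n.
  rewrite !big_ord_recr big_ord0 !mxE /= add0r /dotz /= addr0 !rmorphD !rmorphM.
  by rewrite !addrA.
pose A := col x *m (col x)^T + col y *m (col y)^T.
have A_entry i j : A i j = (x`_i * x`_j + y`_i * y`_j)%:~R.
  by rewrite !mxE !big_ord1 !mxE rmorphD !rmorphM.
exists A; split.
  split=> [|i j ij]; first by rewrite linearD /= !trmx_mul !trmxK.
  rewrite A_entry intr_eq0 Gg.
  by move: (pat i) => /all_vertexP/(_ j); rewrite (negPf (ij : val i != val j)) => /eqP.
exists c%:~R; first by rewrite intr_eq0.
have XX : (col x)^T *m col x = (c%:~R)%:M by rewrite col_dot xx.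
have YY : (col y)^T *m col y = (c%:~R)%:M by rewrite col_dot yy.
have XY : (col x)^T *m col y = 0.
  by rewrite col_dot xy; apply/matrixP => i j; rewrite !mxE mul0rn.
exact: gram_sqr XX YY XY.
Qed.

End Decoding.

Lemma graph_bits_enumerated (G : rel 'I_5) : graph_bits G \in bitseqs 10.
Proof. exact: bitseqsP (graph_bits G). Qed.

Lemma connected_has_edge n (G : rel 'I_n.+2) : irreflexive G -> connected_graph G ->
  exists2 w, ord0 != w & G ord0 w.
Proof.
move=> G_irr G_conn; have /connectP[[|w p] /=] := G_conn ord0 ord_max.
  by move=> _ /(congr1 val).
move=> /andP[G0w _] _; exists w => //.
by apply: contraTneq G0w => <-; rewrite G_irr.
Qed.

Theorem mainTheorem14 (R : realType) (G : rel 'I_5) :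
  simple_graph G -> connected_graph G ->
  (q_eq R G 2 <-> has_spanning_copy G2' G).
Proof.
move=> G_simple G_conn; have [G_sym G_irr] := G_simple.
have Gg := graph_bitsE G_simple; have G_enum := graph_bits_enumerated G.
have [w w0 G0w] := connected_has_edge G_irr G_conn.
rewrite (q_eq_twoP _ w0 G0w); split=> [[A [AS A_eig2]] | /(has_candleP G_sym Gg) candle].
  have A2 := two_eigenvalues_sqr_vanishes AS A_eig2.
  have /allP/(_ _ G_enum)/implyP := connected_graphs_classified.
  case/(_ (connected_cuts_crossed Gg G_conn))/or3P => [/(has_candleP G_sym Gg) // | | ].
    by rewrite (negPf (unique_common_nbr_obstructed Gg G_irr AS A2)).
  by rewrite (negPf (triple_two_common_nbrs_obstructed Gg G_irr AS A2)).
have /allP/(_ _ G_enum)/implyP/(_ candle) := candle_graphs_certified.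
case/hasP => l _ /andP[_ /hasP[cert _ cert_ok]].
have [A [AS [c c0 AA]]] := certificate_sound Gg R cert_ok.
by exists A; split; last exact: sqr_scale_in_S AS w0 G0w c0 AA.
Qed.
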